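(* Let $n\geq 2$ be an integer and let $\mathcal{G}\in\mathbb{EFL}_{n}$ be such that every shared vertex of $\mathcal{G}$ belongs to exactly two defining $n$-cliques of $\mathcal{G}$. Denote the shared vertex common to $Q_i$ and $Q_j$ ($1\le i<j\le n$) by $(i,j)$. (i) If $n$ is even, then the map $c$ on the shared vertices defined by $c\big((i,j)\big)\equiv i+j \pmod{n-1}$ if $j<n$, and $c\big((i,j)\big)\equiv 2i \pmod{n-1}$ if $j=n$, with values in $\{1,\ldots,n-1\}$, is a proper $(n-1)$-colouring of the shared vertices of $\mathcal{G}$ (i.e. any two adjacent shared vertices receive different colours). (ii) If $n$ is odd, then $c\big((i,j)\big)\equiv i+j\pmod{n}$, with values in $\{1,\ldots,n\}$, is a proper $n$-colouring of the shared vertices of $\mathcal{G}$. (iii) $\chi(\mathcal{G})=n$.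
   Context: For a positive integer $n$, $\mathbb{EFL}_{n}$ denotes the class of (simple) graphs $G$ that are the union of $n$ cliques $Q_1,\ldots,Q_n$, each of order $n$ (the defining $n$-cliques), such that any two of them intersect in at most one vertex; i.e. $V(G)=\bigcup V(Q_i)$ and $E(G)=\bigcup E(Q_i)$. A vertex belonging to more than one defining $n$-clique is called shared. If $Q_i$ and $Q_j$ ($i<j$) have a common vertex, it is denoted by the ordered pair $(i,j)$. When reducing modulo $t$, the complete residue system used is $\{1,\ldots,t\}$. $\chi$ denotes the chromatic number. *)

From mathcomp Require Import all_boot.
Set Implicit Arguments. Unset Strict Implicit. Unset Printing Implicit Defensive.

(* Graph G in EFL_n given by its defining cliques Q : 'I_n -> {set V};
   the clique with paper index k (1 <= k <= n) is Q (k-1). *)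

Definition efl_adj (n : nat) (V : finType) (Q : 'I_n -> {set V}) (x y : V) : bool :=
  (x != y) && [exists i, (x \in Q i) && (y \in Q i)].

Definition cliques_of (n : nat) (V : finType) (Q : 'I_n -> {set V}) (v : V) : {set 'I_n} :=
  [set i | v \in Q i].

Definition shared (n : nat) (V : finType) (Q : 'I_n -> {set V}) (v : V) : bool :=
  1 < #|cliques_of Q v|.

Definition is_EFL (n : nat) (V : finType) (Q : 'I_n -> {set V}) : Prop :=
  [/\ forall i, #|Q i| = n,
      forall i j, i != j -> #|Q i :&: Q j| <= 1
    & forall v : V, exists i, v \in Q i].

Definition rmod (t a : nat) : nat := if a %% t == 0 then t else a %% t.

(* colourings of the shared vertex (i,j), i<j paper indices (1-based) *)
Definition c_even (n i j : nat) : nat :=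
  if j < n then rmod n.-1 (i + j) else rmod n.-1 (2 * i).
Definition c_odd (n i j : nat) : nat := rmod n (i + j).

Definition colorable (V : finType) (adj : rel V) (k : nat) : Prop :=
  exists f : V -> 'I_k, forall x y, adj x y -> f x != f y.

Definition is_chromatic_number (V : finType) (adj : rel V) (k : nat) : Prop :=
  colorable adj k /\ forall m, colorable adj m -> k <= m.

(* The shared vertices sit on the edges of K_n: a shared vertex lies in exactly
   two cliques Q_i, Q_j, and two shared vertices are adjacent exactly when their
   pairs {i,j} are distinct and meet.  So colouring the shared vertices properly
   amounts to a proper edge colouring of K_n on the vertices 1..n, and both
   formulas are the classical ones: i + j mod n for n odd, and for n even the
   same on K_(n-1) with vertex n attached to i by the colour 2i, the unique
   colour missing at i.  A clique Q_k then contains s shared vertices using at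
   most s colours out of n, which leaves enough colours for its n - s private
   vertices; conversely Q_k alone needs n colours. *)

From mathcomp Require Import all_boot zify.

Set Implicit Arguments.
Unset Strict Implicit.
Unset Printing Implicit Defensive.

Definition pair_col (c : nat -> nat -> nat) (p q : nat) : nat :=
  c (minn p q) (maxn p q).

Definition proper_edge_coloring (n : nat) (c : nat -> nat -> nat) : Prop :=
  forall p q r, 0 < p <= n -> 0 < q <= n -> 0 < r <= n ->
    q != p -> r != p -> q != r -> pair_col c p q != pair_col c p r.

Lemma pair_colC c p q : pair_col c p q = pair_col c q p.
Proof. by rewrite /pair_col minnC maxnC. Qed.

Lemma pair_col_lt c p q : p < q -> pair_col c p q = c p q.
Proof. by move=> /ltnW pq; rewrite /pair_col (minn_idPl pq) (maxn_idPr pq). Qed.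

Lemma rmod_range t a : 0 < t -> 1 <= rmod t a <= t.
Proof.
by move=> t_gt0; rewrite /rmod; move: (a %% t) (ltn_pmod a t_gt0) => x; case: eqP; lia.
Qed.

Lemma rmod_mod t a : rmod t a = a %[mod t].
Proof. by rewrite /rmod; case: eqP => [->|_]; rewrite ?modnn ?modn_mod. Qed.

Lemma eq_rmod t a b : (rmod t a == rmod t b) = (a == b %[mod t]).
Proof.
apply/eqP/eqP => [ab | ab]; last by rewrite /rmod ab.
by rewrite -rmod_mod ab rmod_mod.
Qed.

Lemma eqn_mod_range t a b : 0 < a <= t -> 0 < b <= t -> (a == b %[mod t]) = (a == b).
Proof.
have modE x : 0 < x <= t -> x %% t = if x == t then 0 else x.
  by case: eqP => [-> _ | xt x_t]; [rewrite modnn | rewrite modn_small //; lia].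
move=> a_t b_t; rewrite (modE a a_t) (modE b b_t).
by case: (a =P t) => [->|a_ne]; case: (b =P t) => [->|b_ne]; apply/eqP/eqP; lia.
Qed.

Lemma eq_rmodDl t c a b : 0 < a <= t -> 0 < b <= t ->
  (rmod t (c + a) == rmod t (c + b)) = (a == b).
Proof. by move=> a_t b_t; rewrite eq_rmod eqn_modDl ?eqn_mod_range //; lia. Qed.

Lemma eqn_mod_double m a b : odd m -> (a.*2 == b.*2 %[mod m]) = (a == b %[mod m]).
Proof.
move=> m_odd; wlog ba : a b / b <= a.
  by move=> W; case: (leqP b a) => [|/ltnW] /W //; rewrite eq_sym => ->; rewrite eq_sym.
rewrite !eqn_mod_dvd ?leq_double // -doubleB -mul2n Gauss_dvdr //.
by rewrite coprimen2.
Qed.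

Lemma proper_edge_coloring_c_odd n : proper_edge_coloring n (c_odd n).
Proof.
move=> p q r p_n q_n r_n _ _ qr.
by rewrite /pair_col /c_odd !addn_min_max eq_rmodDl.
Qed.

Section EvenColoring.

Variable n : nat.
Hypothesis n_gt1 : 1 < n.

(* Vertex n is joined to p by the colour 2p = p + p: it takes the place of the
   missing partner p of p in K_(n-1). *)
Lemma pair_col_c_even_lt p q : p < n -> q != p -> q <= n ->
  pair_col (c_even n) p q = rmod n.-1 (p + (if q == n then p else q)).
Proof.
move=> p_n qp q_n; rewrite /pair_col /c_even.
case: (ltngtP p q) => [pq|qp'|pq]; last by rewrite pq eqxx in qp.
- case: eqP => [->|q_ne]; first by rewrite ltnn mul2n addnn.
  by have -> : q < n by lia.
- have -> : (q == n) = false by apply/negbTE; lia.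
  by rewrite p_n addnC.
Qed.

Lemma pair_col_c_even_top q : q < n -> pair_col (c_even n) n q = rmod n.-1 q.*2.
Proof.
move=> q_n; rewrite /pair_col (minn_idPr (ltnW q_n)) (maxn_idPl (ltnW q_n)) /c_even.
by rewrite ltnn mul2n.
Qed.

Lemma proper_edge_coloring_c_even : ~~ odd n -> proper_edge_coloring n (c_even n).
Proof.
move=> n_even p q r p_n q_n r_n qp rp qr.
have m_gt0 : 0 < n.-1 by lia.
have [p_top|p_lt] := eqVneq p n.
  have m_odd : odd n.-1 by move: n_gt1 n_even; case: n => [|[|k]] //= _ /negPn.
  rewrite p_top !pair_col_c_even_top; try lia.
  by rewrite eq_rmod eqn_mod_double // eqn_mod_range //; lia.
rewrite !pair_col_c_even_lt; try lia.
by case: (q =P n) => q_n'; case: (r =P n) => r_n' /=; rewrite eq_rmodDl; lia.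
Qed.

End EvenColoring.

Lemma nth_index_inj (T U : eqType) (u0 : U) (s : seq T) (t : seq U) :
  uniq t -> size s <= size t -> {in s &, injective (fun x => nth u0 t (index x s))}.
Proof.
move=> t_uniq st x y xs ys /eqP.
rewrite nth_uniq // ?(leq_trans _ st) ?index_mem // => /eqP xy.
by rewrite -(nth_index x xs) xy nth_index.
Qed.

Section SharedVertices.

Variables (n : nat) (V : finType) (Q : 'I_n -> {set V}).
Hypothesis Q_inter : forall i j, i != j -> #|Q i :&: Q j| <= 1.
Hypothesis shared2 : forall v, shared Q v -> #|cliques_of Q v| = 2.

Lemma eq_of_common_cliques (i j : 'I_n) u v : i != j ->
  u \in Q i -> u \in Q j -> v \in Q i -> v \in Q j -> u = v.
Proof. by move=> /Q_inter /card_le1_eqP uv ui uj vi vj; apply: uv; rewrite inE ?ui ?vi. Qed.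

Lemma shared_cliques (i j k : 'I_n) v : shared Q v -> i != j ->
  v \in Q i -> v \in Q j -> v \in Q k -> k = i \/ k = j.
Proof.
move=> v_sh ij vi vj vk.
have ij_sub : [set i; j] \subset cliques_of Q v.
  by apply/subsetP => x; rewrite !inE => /orP[] /eqP ->.
have /eqP/setP/(_ k) : [set i; j] == cliques_of Q v.
  by rewrite eqEcard ij_sub shared2 // cards2 ij.
by rewrite !inE vk => /orP[] /eqP; [left | right].
Qed.

Lemma adj_shared_common_clique u v : shared Q u -> shared Q v -> efl_adj Q u v ->
  exists k a b : 'I_n,
    [/\ k != a, k != b, a != b & [/\ u \in Q k, u \in Q a, v \in Q k & v \in Q b]].
Proof.
move=> u_sh v_sh /andP[uv /existsP[k /andP[uk vk]]].
have other_clique w : shared Q w -> exists2 a, k != a & w \in Q a.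
  rewrite /shared => /card_gt1P[a [b [wa wb ab]]]; rewrite !inE in wa wb.
  by case: (eqVneq a k) => [ak|]; [exists b; rewrite // -ak | exists a; rewrite // eq_sym].
have [a ak ua] := other_clique u u_sh; have [b bk vb] := other_clique v v_sh.
exists k, a, b; split=> //; apply: contraNneq uv => ab.
by rewrite -ab in vb; rewrite (eq_of_common_cliques ak uk ua vk vb).
Qed.

Lemma pair_col_shared c (i j k a : 'I_n) v : shared Q v -> i != j -> k != a ->
  v \in Q i -> v \in Q j -> v \in Q k -> v \in Q a ->
  pair_col c k.+1 a.+1 = pair_col c i.+1 j.+1.
Proof.
move=> v_sh ij + vi vj vk va.
have [] := shared_cliques v_sh ij vi vj vk => ->;
  have [] := shared_cliques v_sh ij vi vj va => ->; rewrite ?eqxx // => _.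
exact: pair_colC.
Qed.

Definition shared_col (c : nat -> nat -> nat) (v : V) : nat :=
  if [pick ij : 'I_n * 'I_n | [&& ij.1 != ij.2, v \in Q ij.1 & v \in Q ij.2]] is Some ij
  then pair_col c ij.1.+1 ij.2.+1 else 0.

Lemma shared_colE c v (i j : 'I_n) : shared Q v -> i != j -> v \in Q i -> v \in Q j ->
  shared_col c v = pair_col c i.+1 j.+1.
Proof.
move=> v_sh ij vi vj; rewrite /shared_col.
case: pickP => [[k a] /and3P[ka vk va] | none].
  exact: (pair_col_shared c v_sh ij ka vi vj vk va).
by move: (none (i, j)); rewrite /= ij vi vj.
Qed.

Lemma shared_col_range c v : (forall p q, 0 < c p q <= n) -> shared Q v ->
  0 < shared_col c v <= n.
Proof.
move=> c_range v_sh; have := v_sh; rewrite /shared => /card_gt1P[i [j [vi vj ij]]].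
by rewrite !inE in vi vj; rewrite (shared_colE c v_sh ij vi vj); apply: c_range.
Qed.

Lemma shared_col_proper c u v : proper_edge_coloring n c ->
  shared Q u -> shared Q v -> efl_adj Q u v -> shared_col c u != shared_col c v.
Proof.
move=> c_proper u_sh v_sh uv.
have [k [a [b [ka kb ab [uk ua vk vb]]]]] := adj_shared_common_clique u_sh v_sh uv.
rewrite (shared_colE c u_sh ka uk ua) (shared_colE c v_sh kb vk vb).
by apply: c_proper; rewrite ?ltn_ord ?eqSS // eq_sym.
Qed.

Lemma adj_shared_col_neq c u v (i j i' j' : 'I_n) : proper_edge_coloring n c ->
  shared Q u -> shared Q v -> efl_adj Q u v ->
  i < j -> u \in Q i -> u \in Q j -> i' < j' -> v \in Q i' -> v \in Q j' ->
  c i.+1 j.+1 != c i'.+1 j'.+1.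
Proof.
move=> c_proper u_sh v_sh uv ij ui uj ij' vi vj.
have i_j : i != j by rewrite neq_ltn ij.
have i_j' : i' != j' by rewrite neq_ltn ij'.
rewrite -[c i.+1 _]pair_col_lt // -[c i'.+1 _]pair_col_lt //.
by rewrite -(shared_colE c u_sh i_j ui uj) -(shared_colE c v_sh i_j' vi vj) shared_col_proper.
Qed.

End SharedVertices.

Lemma card_clique_le_colors n m (V : finType) (Q : 'I_n -> {set V}) (i : 'I_n) :
  colorable (efl_adj Q) m -> #|Q i| <= m.
Proof.
case=> f f_proper.
have f_inj : {in Q i &, injective f}.
  move=> x y xi yi fxy; case: (eqVneq x y) => // xy.
  have : efl_adj Q x y by rewrite /efl_adj xy; apply/existsP; exists i; rewrite xi yi.
  by move/f_proper; rewrite fxy eqxx.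
by rewrite -(card_in_imset f_inj); apply: leq_trans (max_card _) _; rewrite card_ord.
Qed.

Section ExtendColoring.

Variables (n : nat) (V : finType) (Q : 'I_n -> {set V}).
Hypothesis n_gt0 : 0 < n.
Hypothesis Q_card : forall i, #|Q i| <= n.
Variable g : V -> 'I_n.
Hypothesis g_proper : forall u v, shared Q u -> shared Q v -> efl_adj Q u v -> g u != g v.

Let i0 : 'I_n := Ordinal n_gt0.
Let shared_in k := Q k :&: [set x | shared Q x].
Let private_in k := Q k :\: [set x | shared Q x].
Let free_cols k := ~: (g @: shared_in k).
Let clique_of x := odflt i0 [pick i | x \in Q i].
Let private_col k x := nth i0 (enum (free_cols k)) (index x (enum (private_in k))).
Let ext_col x := if shared Q x then g x else private_col (clique_of x) x.

Lemma clique_of_private x k : ~~ shared Q x -> x \in Q k -> clique_of x = k.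
Proof.
move=> x_pr xk; rewrite /clique_of; case: pickP => [i xi | none]; last by rewrite none in xk.
by move: x_pr; rewrite /shared -leqNgt => /card_le1_eqP; apply; rewrite inE.
Qed.

Lemma card_private_le_free k : #|private_in k| <= #|free_cols k|.
Proof.
rewrite /private_in /free_cols.
have := cardsID [set x | shared Q x] (Q k); have := Q_card k.
have := leq_imset_card g (shared_in k); have := cardsC (g @: shared_in k).
rewrite card_ord /shared_in; lia.
Qed.

Lemma private_col_free k x : x \in private_in k -> private_col k x \in free_cols k.
Proof.
move=> x_pr; rewrite -mem_enum mem_nth // -cardE.
by apply: leq_trans (card_private_le_free k); rewrite cardE index_mem mem_enum.
Qed.

Lemma private_col_inj k : {in private_in k &, injective (private_col k)}.
Proof.
move=> x y x_pr y_pr; apply: (nth_index_inj (enum_uniq _)); rewrite ?mem_enum //.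
by rewrite -!cardE card_private_le_free.
Qed.

Lemma ext_col_proper x y : efl_adj Q x y -> ext_col x != ext_col y.
Proof.
move=> xy; have /andP[x_y /existsP[k /andP[xk yk]]] := xy.
have in_shared z : shared Q z -> z \in Q k -> g z \notin free_cols k.
  by move=> z_sh zk; rewrite inE negbK imset_f // inE zk inE.
have in_private z : ~~ shared Q z -> z \in Q k -> z \in private_in k.
  by move=> z_pr zk; rewrite !inE z_pr zk.
rewrite /ext_col; case: ifPn => x_sh; case: ifPn => y_sh.
- exact: g_proper.
- rewrite (clique_of_private y_sh yk); apply: contraNneq (in_shared x x_sh xk) => ->.
  exact/private_col_free/in_private.
- rewrite (clique_of_private x_sh xk); apply: contraNneq (in_shared y y_sh yk) => <-.
  exact/private_col_free/in_private.
- rewrite (clique_of_private x_sh xk) (clique_of_private y_sh yk).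
  by apply: contraNneq x_y => /private_col_inj ->; rewrite ?in_private.
Qed.

Lemma colorable_of_shared_coloring : colorable (efl_adj Q) n.
Proof. by exists ext_col; apply: ext_col_proper. Qed.

End ExtendColoring.

Theorem theorem2p4 (n : nat) (V : finType) (Q : 'I_n -> {set V}) :
  2 <= n ->
  is_EFL Q ->
  (forall v, shared Q v -> #|cliques_of Q v| = 2) ->
  [/\
   (* (i) *)
   (~~ odd n ->
      (forall (v : V) (i j : 'I_n), i < j -> v \in Q i -> v \in Q j ->
         1 <= c_even n i.+1 j.+1 <= n.-1) /\
      (forall (u v : V) (i j i' j' : 'I_n),
         shared Q u -> shared Q v -> efl_adj Q u v ->
         i < j -> u \in Q i -> u \in Q j ->
         i' < j' -> v \in Q i' -> v \in Q j' ->
         c_even n i.+1 j.+1 != c_even n i'.+1 j'.+1)),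
   (* (ii) *)
   (odd n ->
      (forall (v : V) (i j : 'I_n), i < j -> v \in Q i -> v \in Q j ->
         1 <= c_odd n i.+1 j.+1 <= n) /\
      (forall (u v : V) (i j i' j' : 'I_n),
         shared Q u -> shared Q v -> efl_adj Q u v ->
         i < j -> u \in Q i -> u \in Q j ->
         i' < j' -> v \in Q i' -> v \in Q j' ->
         c_odd n i.+1 j.+1 != c_odd n i'.+1 j'.+1))
   (* (iii) *)
   & is_chromatic_number (efl_adj Q) n].
Proof.
move=> n_gt1 [Q_card Q_inter _] shared2.
have n_gt0 : 0 < n by apply: ltnW.
have c_odd_range p q : 0 < c_odd n p q <= n by apply: rmod_range.
split; [move=> n_even; split | move=> _; split | split].
- by move=> v i j _ _ _; rewrite /c_even; case: ifP => _; apply: rmod_range; lia.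
- move=> u v i j i' j'.
  exact: (adj_shared_col_neq Q_inter shared2 (proper_edge_coloring_c_even n_gt1 n_even)).
- by move=> v i j _ _ _.
- move=> u v i j i' j'.
  exact: (adj_shared_col_neq Q_inter shared2 (proper_edge_coloring_c_odd (n := n))).
- have Q_le i : #|Q i| <= n by rewrite Q_card.
  (* i + j mod n properly edge-colours K_n whatever the parity of n. *)
  pose g v := Ordinal (ltn_pmod (shared_col Q (c_odd n) v) n_gt0).
  apply: (colorable_of_shared_coloring n_gt0 Q_le (g := g)) => u v u_sh v_sh uv.
  rewrite -val_eqE /= eqn_mod_range ?(shared_col_range shared2) //.
  exact: (shared_col_proper Q_inter shared2 (proper_edge_coloring_c_odd (n := n))
            u_sh v_sh uv).
- by move=> m /(card_clique_le_colors (Ordinal n_gt0)); rewrite Q_card.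
Qed.
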